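(* Let $\gamma_X=(X,d_X(\cdot))$ and $\gamma_Y=(Y,d_Y(\cdot))$ be any two dynamic metric spaces. Then \[\mathbf{d}_{\mathrm{I}}^{\mathbf{Sets}}(\theta(\gamma_X),\theta(\gamma_Y))\le 2\cdot d_{\mathtt{dyn}}(\gamma_X,\gamma_Y).\]
   Context: A dynamic metric space (DMS) is a pair $\gamma_X=(X,d_X(\cdot))$ where $X$ is a nonempty finite set and $d_X(\cdot):\mathbf{R}\times X\times X\to\mathbf{R}_+$ satisfies: each $d_X(t)$ is a pseudometric, some $d_X(t_0)$ is a metric, and $t\mapsto d_X(t)(x,x')$ is continuous for all $x,x'$. $\mathbf{Int}$ is the set of finite closed intervals of $\mathbf{R}$; $(\bigvee_I d_X)(x,x'):=\min_{s\in I}d_X(s)(x,x')$; for $I=[u,u']$, $I^\varepsilon=[u-\varepsilon,u'+\varepsilon]$; $[t]^\varepsilon=[t-\varepsilon,t+\varepsilon]$. A tripod between $X$ and $Y$ is a set $Z$ with surjections $\varphi_X:Z\to X$, $\varphi_Y:Z\to Y$; it is an $\varepsilon$-tripod between $\gamma_X,\gamma_Y$ if for all $t\in\mathbf{R}$, $z,z'\in Z$: $(\bigvee_{[t]^\varepsilon}d_X)(\varphi_X(z),\varphi_X(z'))\le d_Y(t)(\varphi_Y(z),\varphi_Y(z'))+2\varepsilon$ and $(\bigvee_{[t]^\varepsilon}d_Y)(\varphi_Y(z),\varphi_Y(z'))\le d_X(t)(\varphi_X(z),\varphi_X(z'))+2\varepsilon$. $d_{\mathtt{dyn}}(\gamma_X,\gamma_Y)$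 is the minimum over tripods of the infimum of $\varepsilon$ for which the tripod is an $\varepsilon$-tripod ($\infty$ if none). Order $\mathbf{Int}\times\mathbf{R}_+$ by $(I,\delta)\le(J,\delta')$ iff $I\subseteq J$, $\delta\le\delta'$. For $(I,\delta)$, let $\sim^I_{X,\delta}$ be the equivalence relation on $X$: $x\sim x'$ iff there are $x=x_0,\dots,x_n=x'$ with $(\bigvee_I d_X)(x_i,x_{i+1})\le\delta$. The spatiotemporal SLHC dendrogram $\theta(\gamma_X):\mathbf{Int}\times\mathbf{R}_+\to\mathbf{Sets}$ sends $(I,\delta)$ to the partition $X/\sim^I_{X,\delta}$ and $(I,\delta)\le(J,\delta')$ to the natural map sending each block to the block of $X/\sim^J_{X,\delta'}$ containing it. For functors $F,G:\mathbf{Int}\times\mathbf{R}_+\to\mathbf{Sets}$, an $\varepsilon$-interleaving consists of natural families of maps $f_{(I,\delta)}:F_{(I,\delta)}\to G_{(I^\varepsilon,\delta+\varepsilon)}$, $g_{(I,\delta)}:G_{(I,\delta)}\to F_{(I^\varepsilon,\delta+\varepsilon)}$ with $g_{(I^\varepsilon,\delta+\varepsilon)}\circ f_{(I,\delta)}=F((I,\delta)\le(I^{2\varepsilon},\delta+2\varepsilon))$ and $f_{(I^\varepsilon,\delta+\varepsilon)}\circ g_{(I,\delta)}=G((I,\delta)\le(I^{2\varepsilon},\delta+2\varepsilon))$. $\mathbf{d}_{\mathrm{I}}^{\mathbf{Sets}}(F,G)$ is the infimum of $\varepsilon$ admitting such an interleaving with all $f_{(I,\delta)},g_{(I,\delta)}$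 surjective ($\infty$ if none). *)

From HB Require Import structures.
From mathcomp Require Import all_boot all_order all_algebra.
From mathcomp Require Import all_classical all_reals all_analysis.
From Stdlib Require Import Relations.Relation_Operators.
Set Implicit Arguments. Unset Strict Implicit. Unset Printing Implicit Defensive.
Import Order.TTheory GRing.Theory Num.Theory.
Import numFieldNormedType.Exports.
Local Open Scope classical_set_scope.
Local Open Scope ring_scope.

Definition is_pseudometric (R : realType) (X : Type) (d : X -> X -> R) :=
  [/\ forall x x', 0 <= d x x',
      forall x, d x x = 0,
      forall x x', d x x' = d x' x &
      forall x x' x'', d x x'' <= d x x' + d x' x''].

Definition is_metric (R : realType) (X : Type) (d : X -> X -> R) :=
  is_pseudometric d /\ forall x x', d x x' = 0 -> x = x'.

Record dms (R : realType) (X : finType) := DMS {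
  dist : R -> X -> X -> R;
  dms_nonempty : exists x : X, True;
  dms_pseudo : forall t, is_pseudometric (dist t);
  dms_metric : exists t0, is_metric (dist t0);
  dms_cont : forall x x', continuous (fun t => dist t x x')
}.

(* Finite closed intervals [u, u'] are encoded by pairs (u, u') with u <= u'. *)
Definition is_itv (R : realType) (I : R * R) := I.1 <= I.2.
Definition itv_set (R : realType) (I : R * R) : set R := [set s | I.1 <= s <= I.2].
Definition itv_sub (R : realType) (I J : R * R) := J.1 <= I.1 /\ I.2 <= J.2.
Definition itv_thick (R : realType) (I : R * R) (e : R) : R * R := (I.1 - e, I.2 + e).
Definition pt_thick (R : realType) (t e : R) : R * R := (t - e, t + e).

(* (\/_I d_X)(x,x') = min_{s in I} d_X(s)(x,x') (the infimum is attained by continuity) *)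
Definition vee (R : realType) (X : finType) (g : dms R X) (I : R * R) (x x' : X) : R :=
  inf [set dist g s x x' | s in itv_set I].

Definition surj (A B : Type) (h : A -> B) := forall b, exists a, h a = b.

Definition eps_tripod (R : realType) (X Y : finType) (gX : dms R X) (gY : dms R Y)
  (Z : Type) (phX : Z -> X) (phY : Z -> Y) (e : R) :=
  forall (t : R) (z z' : Z),
    vee gX (pt_thick t e) (phX z) (phX z') <= dist gY t (phY z) (phY z') + 2 * e /\
    vee gY (pt_thick t e) (phY z) (phY z') <= dist gX t (phX z) (phX z') + 2 * e.

(* min over tripods of inf of eps = inf over all (tripod, eps) pairs; +oo if none *)
Definition d_dyn (R : realType) (X Y : finType) (gX : dms R X) (gY : dms R Y) : \bar R :=
  ereal_inf [set (e%:E) | e in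
    [set e : R | 0 <= e /\ exists (Z : Type) (phX : Z -> X) (phY : Z -> Y),
        [/\ surj phX, surj phY & eps_tripod gX gY phX phY e]]].

(* A functor F : Int x R_+ -> Sets is presented by a carrier type, the set F_(I,delta)
   (a subset of the carrier) for each object, and the transition maps
   F((I,delta) <= (J,delta')) as functions on the carrier (only their behaviour on
   F_(I,delta) matters). *)
Record pfunctor (R : realType) := PFunctor {
  pf_T : Type;
  pf_obj : R * R -> R -> set pf_T;
  pf_map : R * R -> R -> R * R -> R -> pf_T -> pf_T
}.

Arguments pf_T {R} _.
Arguments pf_obj {R} _ _ _ _.
Arguments pf_map {R} _ _ _ _ _ _.

Definition obj_ok (R : realType) (I : R * R) (d : R) := is_itv I /\ 0 <= d.
Definition obj_le (R : realType) (I : R * R) (d : R) (J : R * R) (d' : R) :=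
  itv_sub I J /\ d <= d'.

Definition surj_interleaving (R : realType) (F G : pfunctor R) (e : R) :=
  exists (f : R * R -> R -> pf_T F -> pf_T G) (g : R * R -> R -> pf_T G -> pf_T F),
  [/\
   forall I d, obj_ok I d ->
     (forall b, pf_obj F I d b -> pf_obj G (itv_thick I e) (d + e) (f I d b)) /\
     (forall c, pf_obj G (itv_thick I e) (d + e) c ->
        exists2 b, pf_obj F I d b & f I d b = c),
   forall I d, obj_ok I d ->
     (forall c, pf_obj G I d c -> pf_obj F (itv_thick I e) (d + e) (g I d c)) /\
     (forall b, pf_obj F (itv_thick I e) (d + e) b ->
        exists2 c, pf_obj G I d c & g I d c = b),
   forall I d J d', obj_ok I d -> obj_ok J d' -> obj_le I d J d' ->
     (forall b, pf_obj F I d b ->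
        pf_map G (itv_thick I e) (d + e) (itv_thick J e) (d' + e) (f I d b)
        = f J d' (pf_map F I d J d' b)) /\
     (forall c, pf_obj G I d c ->
        pf_map F (itv_thick I e) (d + e) (itv_thick J e) (d' + e) (g I d c)
        = g J d' (pf_map G I d J d' c)),
   forall I d, obj_ok I d -> forall b, pf_obj F I d b ->
     g (itv_thick I e) (d + e) (f I d b) = pf_map F I d (itv_thick I (2 * e)) (d + 2 * e) b &
   forall I d, obj_ok I d -> forall c, pf_obj G I d c ->
     f (itv_thick I e) (d + e) (g I d c) = pf_map G I d (itv_thick I (2 * e)) (d + 2 * e) c].

Definition dI_sets (R : realType) (F G : pfunctor R) : \bar R :=
  ereal_inf [set (e%:E) | e in [set e : R | 0 <= e /\ surj_interleaving F G e]].

Definition slhc_rel (R : realType) (X : finType) (g : dms R X) (I : R * R) (d : R) : X -> X -> Prop :=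
  clos_refl_trans X (fun a b => vee g I a b <= d).

Definition slhc_block (R : realType) (X : finType) (g : dms R X) (I : R * R) (d : R) (x : X) : set X :=
  [set y | slhc_rel g I d x y].

(* theta(gamma_X): (I,d) |-> X / ~^I_{X,d} (set of blocks); transition maps send a block
   to the block of the larger parameter containing it. *)
Definition theta (R : realType) (X : finType) (g : dms R X) : pfunctor R :=
  @PFunctor R (set X)
    (fun I d => [set B | exists x : X, B = slhc_block g I d x])
    (fun I d J d' B => [set y | exists2 x, B x & slhc_rel g J d' x y]).

From Pilot Require Import Defs.
From HB Require Import structures.
From mathcomp Require Import all_boot all_order all_algebra.
From mathcomp Require Import all_classical all_reals all_analysis.
From mathcomp Require Import lra.
From Stdlib Require Import Relations.Relation_Operators.
Set Implicit Arguments. Unset Strict Implicit. Unset Printing Implicit Defensive.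
Import Order.TTheory GRing.Theory Num.Theory.
Local Open Scope classical_set_scope.
Local Open Scope ring_scope.

(* Let (Z, phX, phY) be an e-tripod.  If vee_I d_X (phX z, phX z') <= d, pick
   s in I with d_X(s) (phX z, phX z') close to that minimum; the tripod bounds
   vee_[s]^e d_Y (phY z, phY z') by d + 2e, and [s]^e lies inside I^(2e).  So
   every step of a chain at level (I, d) in X becomes a step at level
   (I^(2e), d + 2e) in Y, and sending the block of phX z to the block of phY z
   is well defined.  These maps and the symmetric ones form a 2e-interleaving
   of the dendrograms, surjective because phX and phY are. *)

Section Dendrogram.

Variables (R : realType) (A : finType) (g : dms R A).

Lemma dist_ge0 s x y : 0 <= dist g s x y.
Proof. by case: (dms_pseudo g s). Qed.

Lemma dist_xx s x : dist g s x x = 0.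
Proof. by case: (dms_pseudo g s). Qed.

Lemma vee_le_dist I s x y : I.1 <= s <= I.2 -> vee g I x y <= dist g s x y.
Proof.
move=> Is; apply: ge_inf; last by exists s.
by exists 0 => _ [r _ <-]; exact: dist_ge0.
Qed.

Lemma vee_adherent I x y eta : is_itv I -> 0 < eta ->
  exists2 s, I.1 <= s <= I.2 & dist g s x y < vee g I x y + eta.
Proof.
move=> I_itv eta_gt0.
have has_inf_dist : has_inf [set dist g s x y | s in itv_set I].
  split; last by exists 0 => _ [r _ <-]; exact: dist_ge0.
  by exists (dist g I.1 x y), I.1; rewrite // /itv_set /= lexx.
by have [_ [s Is <-] ?] := inf_adherent eta_gt0 has_inf_dist; exists s.
Qed.

Lemma le_vee_sub I J x y : is_itv I -> itv_sub I J -> vee g J x y <= vee g I x y.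
Proof.
move=> I_itv [J1I1 I2J2]; apply/ler_addgt0Pr => eta eta_gt0.
have [s /andP[I1s sI2] lt_s] := vee_adherent x y I_itv eta_gt0.
have Js : J.1 <= s <= J.2 by apply/andP; split; lra.
by have := vee_le_dist x y Js; lra.
Qed.

Lemma slhc_rel_mono I d J d' x y : is_itv I -> itv_sub I J -> d <= d' ->
  slhc_rel g I d x y -> slhc_rel g J d' x y.
Proof.
move=> I_itv IJ dd'; elim=> [a b ab | a | a b c _ IHab _ IHbc].
- by apply: rt_step; have := le_vee_sub a b I_itv IJ; lra.
- exact: rt_refl.
- exact: rt_trans IHab IHbc.
Qed.

Lemma theta_map_block I d J d' x : is_itv I -> itv_sub I J -> d <= d' ->
  pf_map (theta g) I d J d' (slhc_block g I d x) = slhc_block g J d' x.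
Proof.
move=> I_itv IJ dd'; apply/seteqP; split => y /=.
- by case=> x' xx' x'y; apply: rt_trans x'y; exact: slhc_rel_mono xx'.
- by exists x => //; exact: rt_refl.
Qed.

End Dendrogram.

Lemma itv_thick_ok (R : realType) (I : R * R) (d e : R) :
  0 <= e -> obj_ok I d -> obj_ok (itv_thick I e) (d + e).
Proof. by rewrite /obj_ok /is_itv /= => e_ge0 [I_itv d_ge0]; split; lra. Qed.

Lemma itv_thickD (R : realType) (I : R * R) (e e' : R) :
  itv_thick (itv_thick I e) e' = itv_thick I (e + e').
Proof. by rewrite /itv_thick /=; congr pair; lra. Qed.

(* Half of [eps_tripod]; the two halves are used with the roles of X and Y swapped. *)
Definition tripod_bound (R : realType) (A B : finType) (gA : dms R A) (gB : dms R B)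
    (Z : Type) (phA : Z -> A) (phB : Z -> B) (e : R) :=
  forall t z z', vee gB (pt_thick t e) (phB z) (phB z') <= dist gA t (phA z) (phA z') + 2 * e.

Section TripodMap.

Variables (R : realType) (A B : finType) (gA : dms R A) (gB : dms R B).
Variables (Z : Type) (phA : Z -> A) (phB : Z -> B) (e : R).
Hypotheses (phA_surj : Defs.surj phA) (e_ge0 : 0 <= e).
Hypothesis boundAB : tripod_bound gA gB phA phB e.

Definition tripod_map (I : R * R) (d : R) (S : set A) : set B :=
  [set b | exists z, S (phA z) /\ slhc_rel gB (itv_thick I (2 * e)) (d + 2 * e) (phB z) b].

Lemma vee_tripod_le I d z z' : is_itv I -> vee gA I (phA z) (phA z') <= d ->
  vee gB (itv_thick I (2 * e)) (phB z) (phB z') <= d + 2 * e.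
Proof.
move=> I_itv le_d; apply/ler_addgt0Pr => eta eta_gt0.
have [s /andP[I1s sI2] lt_s] := vee_adherent gA (phA z) (phA z') I_itv eta_gt0.
have s_itv : is_itv (pt_thick s e) by rewrite /is_itv /=; have := e_ge0; lra.
have sub_s : itv_sub (pt_thick s e) (itv_thick I (2 * e)).
  by rewrite /itv_sub /=; have := e_ge0; split; lra.
have := le_vee_sub gB (phB z) (phB z') s_itv sub_s.
by have := boundAB s z z'; lra.
Qed.

Lemma slhc_rel_tripod I d a a' z z' : obj_ok I d ->
  slhc_rel gA I d a a' -> phA z = a -> phA z' = a' ->
  slhc_rel gB (itv_thick I (2 * e)) (d + 2 * e) (phB z) (phB z').
Proof.
move=> [I_itv d_ge0] rel_aa'.
elim: rel_aa' z z' => [x y xy | x | x y w _ IHxy _ IHyw] z z' zx z'y.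
- by apply/rt_step/vee_tripod_le; rewrite ?zx ?z'y.
- apply/rt_step/vee_tripod_le; rewrite // zx z'y.
  have I1_in : I.1 <= I.1 <= I.2 by rewrite lexx.
  by rewrite (le_trans (vee_le_dist gA x x I1_in)) // dist_xx.
- have [z'' z''y] := phA_surj y.
  exact: rt_trans (IHxy z z'' zx z''y) (IHyw z'' z' z''y z'y).
Qed.

Lemma tripod_map_block I d z :
  obj_ok I d -> tripod_map I d (slhc_block gA I d (phA z)) =
  slhc_block gB (itv_thick I (2 * e)) (d + 2 * e) (phB z).
Proof.
move=> Id_ok; apply/seteqP; split => b /=.
- by case=> z' [zz' z'b]; apply: rt_trans z'b; exact: slhc_rel_tripod zz' _ _.
- by move=> zb; exists z; split => //; exact: rt_refl.
Qed.

Lemma tripod_map_obj I d : Defs.surj phB -> obj_ok I d ->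
  (forall S, pf_obj (theta gA) I d S ->
     pf_obj (theta gB) (itv_thick I (2 * e)) (d + 2 * e) (tripod_map I d S)) /\
  (forall T, pf_obj (theta gB) (itv_thick I (2 * e)) (d + 2 * e) T ->
     exists2 S, pf_obj (theta gA) I d S & tripod_map I d S = T).
Proof.
move=> phB_surj Id_ok; split.
- move=> _ [x ->]; have [z <-] := phA_surj x.
  by exists (phB z); exact: tripod_map_block.
- move=> _ [y ->]; have [z <-] := phB_surj y.
  by exists (slhc_block gA I d (phA z)); [exists (phA z) | exact: tripod_map_block].
Qed.

Lemma tripod_map_natural I d J d' : obj_ok I d -> obj_ok J d' -> obj_le I d J d' ->
  forall S, pf_obj (theta gA) I d S ->
    pf_map (theta gB) (itv_thick I (2 * e)) (d + 2 * e) (itv_thick J (2 * e)) (d' + 2 * e)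
      (tripod_map I d S)
    = tripod_map J d' (pf_map (theta gA) I d J d' S).
Proof.
move=> Id_ok Jd'_ok [IJ dd'] _ [x ->]; have [z <-] := phA_surj x.
have [I_itv _] := Id_ok.
have [I2e_itv _] := itv_thick_ok (mulr_ge0 (ler0n R 2) e_ge0) Id_ok.
have IJ2e : itv_sub (itv_thick I (2 * e)) (itv_thick J (2 * e)).
  by case: IJ; rewrite /itv_sub /= => *; split; lra.
have dd'2e : d + 2 * e <= d' + 2 * e by rewrite lerD2r.
by rewrite tripod_map_block // !theta_map_block // tripod_map_block.
Qed.

End TripodMap.

Lemma tripod_map_comp (R : realType) (A B : finType) (gA : dms R A) (gB : dms R B)
    (Z : Type) (phA : Z -> A) (phB : Z -> B) (e : R) :
  Defs.surj phA -> Defs.surj phB -> 0 <= e ->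
  tripod_bound gA gB phA phB e -> tripod_bound gB gA phB phA e ->
  forall I d, obj_ok I d -> forall S, pf_obj (theta gA) I d S ->
    tripod_map gA phB phA e (itv_thick I (2 * e)) (d + 2 * e) (tripod_map gB phA phB e I d S)
    = pf_map (theta gA) I d (itv_thick I (2 * (2 * e))) (d + 2 * (2 * e)) S.
Proof.
move=> phA_surj phB_surj e_ge0 boundAB boundBA I d Id_ok _ [x ->].
have [z <-] := phA_surj x; have [I_itv _] := Id_ok.
have two_e_ge0 : 0 <= 2 * e by lra.
have I4e : itv_sub I (itv_thick I (2 * (2 * e))) by rewrite /itv_sub /=; split; lra.
have I2e_ok : obj_ok (itv_thick I (2 * e)) (d + 2 * e) by exact: itv_thick_ok.
rewrite tripod_map_block // (tripod_map_block phB_surj) //.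
rewrite itv_thickD theta_map_block //; last lra.
by congr (slhc_block _ (itv_thick _ _) _); lra.
Qed.

Lemma tripod_surj_interleaving (R : realType) (X Y : finType) (gX : dms R X) (gY : dms R Y)
    (Z : Type) (phX : Z -> X) (phY : Z -> Y) (e : R) :
  Defs.surj phX -> Defs.surj phY -> 0 <= e -> eps_tripod gX gY phX phY e ->
  surj_interleaving (theta gX) (theta gY) (2 * e).
Proof.
move=> phX_surj phY_surj e_ge0 tripod.
have boundXY : tripod_bound gX gY phX phY e by move=> t z z'; case: (tripod t z z').
have boundYX : tripod_bound gY gX phY phX e by move=> t z z'; case: (tripod t z z').
exists (tripod_map gY phX phY e), (tripod_map gX phY phX e); split.
- by move=> I d; exact: tripod_map_obj.
- by move=> I d; exact: tripod_map_obj.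
- by move=> I d J d' Id_ok Jd'_ok le_IJ; split; exact: tripod_map_natural.
- exact: tripod_map_comp.
- exact: tripod_map_comp.
Qed.

Local Open Scope ereal_scope.

Theorem theorem6p17 (R : realType) (X Y : finType) (gX : dms R X) (gY : dms R Y) :
  dI_sets (theta gX) (theta gY) <= 2%:E * d_dyn gX gY.
Proof.
rewrite -lee_pdivrMl //; apply: le_ereal_inf_tmp.
move=> _ [e [e_ge0 [Z [phX [phY [phX_surj phY_surj tripod]]]]] <-].
rewrite lee_pdivrMl // -EFinM; apply: ereal_inf_lbound.
exists (2 * e)%R => //; split; first by rewrite mulr_ge0.
exact: tripod_surj_interleaving.
Qed.
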